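(* Let $\sigma:\mathbb{R}\to\mathbb{R}$ be an increasing odd homeomorphism. The monoid generated by $h_\sigma$ and $v_\sigma$ and the monoid generated by $h_\sigma^{-1}$ and $v_\sigma^{-1}$ are both free (on the respective two generators).
   Context: $h_\sigma(x,y)=(x+\sigma^{-1}(y),y)$ and $v_\sigma(x,y)=(x,\sigma(x)+y)$ are bijections of $\mathbb{R}^2$; the monoid operation is composition. *)

From Stdlib Require Import Reals List.
Open Scope R_scope.

Definition h_sig (sinv : R -> R) (p : R * R) : R * R :=
  (fst p + sinv (snd p), snd p).

Definition v_sig (s : R -> R) (p : R * R) : R * R :=
  (fst p, s (fst p) + snd p).

(* Evaluation of a word over the two-letter alphabet {true, false}
   (true = a, false = b) as the composite map in the monoid of
   self-maps under composition: [c1; ...; cn] |-> g_c1 o ... o g_cn. *)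
Definition word_eval {T : Type} (a b : T -> T) (w : list bool) : T -> T :=
  fold_right (fun (c : bool) (f : T -> T) => fun x : T => (if c then a else b) (f x)) (fun x => x) w.

(* The monoid generated by a and b is free on a and b: the canonical
   monoid morphism from the free monoid on two letters is injective. *)
Definition free_on2 {T : Type} (a b : T -> T) : Prop :=
  forall w1 w2 : list bool, word_eval a b w1 = word_eval a b w2 -> w1 = w2.

Definition inc_odd_homeo (s sinv : R -> R) : Prop :=
  (forall x, sinv (s x) = x) /\ (forall y, s (sinv y) = y) /\
  continuity s /\ continuity sinv /\
  (forall x y, x < y -> s x < s y) /\
  (forall x, s (- x) = - s x).

(** Ping-pong.  On the open quadrant [x > 0, y > 0], [h_sigma] lands strictly
    below the graph of [sigma] and [v_sigma] strictly above it, and both keep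
    the quadrant invariant; so at a base point on the graph the leftmost letter
    of a word can be read off the image, and injectivity peels it off.  Writing
    [r (x, y) = (-x, y)], the inverses are the conjugates [r h_sigma r] and
    [r v_sigma r] (the second by oddness of [sigma]), so freeness transfers. *)

From Stdlib Require Import Reals List Lra.
Open Scope R_scope.

Definition free_at {T : Type} (a b : T -> T) (p : T) : Prop :=
  forall w1 w2 : list bool, word_eval a b w1 p = word_eval a b w2 p -> w1 = w2.

Lemma word_eval_cons {T : Type} (a b : T -> T) c w x :
  word_eval a b (c :: w) x = (if c then a else b) (word_eval a b w x).
Proof. reflexivity. Qed.

Lemma free_at_free_on2 {T : Type} (a b : T -> T) (p : T) :
  free_at a b p -> free_on2 a b.
Proof.
  intros Hfree w1 w2 E. apply Hfree. rewrite E. reflexivity.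
Qed.

Lemma word_eval_ext {T : Type} (a b a' b' : T -> T) w x :
  (forall y, a y = a' y) -> (forall y, b y = b' y) ->
  word_eval a b w x = word_eval a' b' w x.
Proof.
  intros Ea Eb. induction w as [|c w IH]; [reflexivity|].
  rewrite !word_eval_cons, IH. destruct c; auto.
Qed.

Lemma free_at_ext {T : Type} (a b a' b' : T -> T) (p : T) :
  (forall y, a y = a' y) -> (forall y, b y = b' y) ->
  free_at a b p -> free_at a' b' p.
Proof.
  intros Ea Eb Hfree w1 w2 E. apply Hfree.
  rewrite !(word_eval_ext a b a' b') by assumption. exact E.
Qed.

Lemma word_eval_conj {T : Type} (r a b : T -> T) w x :
  (forall y, r (r y) = y) ->
  word_eval (fun y => r (a (r y))) (fun y => r (b (r y))) w x
  = r (word_eval a b w (r x)).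
Proof.
  intros rK. induction w as [|c w IH].
  - symmetry. apply rK.
  - rewrite !word_eval_cons, IH. destruct c; cbv beta iota; rewrite rK; reflexivity.
Qed.

Lemma free_at_conj {T : Type} (r a b : T -> T) (p : T) :
  (forall y, r (r y) = y) -> free_at a b p ->
  free_at (fun y => r (a (r y))) (fun y => r (b (r y))) (r p).
Proof.
  intros rK Hfree w1 w2 E. apply Hfree.
  rewrite !word_eval_conj, rK in E by exact rK.
  rewrite <- (rK (word_eval a b w1 p)), E. apply rK.
Qed.

Section PingPong.

Variables (T : Type) (a b : T -> T) (P A B : T -> Prop) (p0 : T).
Hypotheses (a_inj : forall x y, a x = a y -> x = y)
           (b_inj : forall x y, b x = b y -> x = y).
Hypotheses (P_p0 : P p0) (A_p0 : ~ A p0) (B_p0 : ~ B p0).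
Hypotheses (a_P : forall q, P q -> P (a q)) (a_A : forall q, P q -> A (a q))
           (b_P : forall q, P q -> P (b q)) (b_B : forall q, P q -> B (b q)).
Hypothesis AB_disjoint : forall q, A q -> B q -> False.

Let region (c : bool) : T -> Prop := if c then A else B.

Lemma word_eval_P w : P (word_eval a b w p0).
Proof.
  induction w as [|[|] w IH]; [exact P_p0| |]; rewrite word_eval_cons; auto.
Qed.

Lemma word_eval_region c w : region c (word_eval a b (c :: w) p0).
Proof. rewrite word_eval_cons. destruct c; simpl; auto using word_eval_P. Qed.

Lemma word_eval_cons_neq c w : word_eval a b (c :: w) p0 <> p0.
Proof.
  intros E. assert (H := word_eval_region c w). rewrite E in H.
  destruct c; auto.
Qed.

Lemma pingpong_free_at : free_at a b p0.
Proof.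
  intros w1. induction w1 as [|c w1 IH]; intros [|d w2] E.
  - reflexivity.
  - exfalso. apply (word_eval_cons_neq d w2). symmetry. exact E.
  - exfalso. apply (word_eval_cons_neq c w1). exact E.
  - assert (Hc := word_eval_region c w1). assert (Hd := word_eval_region d w2).
    rewrite E in Hc. rewrite !word_eval_cons in E.
    destruct c, d; simpl in Hc, Hd.
    + f_equal. auto.
    + destruct (AB_disjoint _ Hc Hd).
    + destruct (AB_disjoint _ Hd Hc).
    + f_equal. auto.
Qed.

End PingPong.

Definition reflect_x (p : R * R) : R * R := (- fst p, snd p).

Lemma reflect_xK p : reflect_x (reflect_x p) = p.
Proof. destruct p; unfold reflect_x; simpl. f_equal. ring. Qed.

Lemma h_sig_inj sinv p q : h_sig sinv p = h_sig sinv q -> p = q.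
Proof.
  destruct p as [x y], q as [x' y']; unfold h_sig; simpl.
  intros E. injection E as Ex Ey. subst y'. f_equal. lra.
Qed.

Lemma v_sig_inj s p q : v_sig s p = v_sig s q -> p = q.
Proof.
  destruct p as [x y], q as [x' y']; unfold v_sig; simpl.
  intros E. injection E as Ex Ey. subst x'. f_equal. lra.
Qed.

Lemma h_sig_reflect_involutive sinv p :
  h_sig sinv (reflect_x (h_sig sinv (reflect_x p))) = p.
Proof. destruct p; unfold h_sig, reflect_x; simpl. f_equal. ring. Qed.

Lemma v_sig_reflect_involutive s (s_odd : forall x, s (- x) = - s x) p :
  v_sig s (reflect_x (v_sig s (reflect_x p))) = p.
Proof.
  destruct p as [x y]; unfold v_sig, reflect_x; simpl.
  rewrite Ropp_involutive, s_odd. f_equal. ring.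
Qed.

Lemma left_inv_eq_right_inv {T : Type} (f finv g : T -> T) :
  (forall p, finv (f p) = p) -> (forall p, f (g p) = p) ->
  forall p, finv p = g p.
Proof. intros fK gK p. rewrite <- (gK p) at 1. apply fK. Qed.

Section Sigma.

Variables s sinv : R -> R.
Hypotheses (s_sinv : forall y, s (sinv y) = y)
           (s_incr : forall x y, x < y -> s x < s y)
           (s_odd : forall x, s (- x) = - s x).

Lemma s_0 : s 0 = 0.
Proof. assert (H := s_odd 0). rewrite Ropp_0 in H. lra. Qed.

Lemma s_pos x : 0 < x -> 0 < s x.
Proof. intros Hx. rewrite <- s_0. apply s_incr, Hx. Qed.

Lemma sinv_pos y : 0 < y -> 0 < sinv y.
Proof.
  intros Hy. destruct (Rtotal_order (sinv y) 0) as [H|[H|H]].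
  - apply s_incr in H. rewrite s_sinv, s_0 in H. lra.
  - rewrite <- (s_sinv y), H, s_0 in Hy. lra.
  - exact H.
Qed.

Lemma free_at_h_v : free_at (h_sig sinv) (v_sig s) (1, s 1).
Proof.
  assert (s1 := s_pos 1 Rlt_0_1).
  apply (pingpong_free_at _ _ _ (fun p => 0 < fst p /\ 0 < snd p)
           (fun p => snd p < s (fst p)) (fun p => s (fst p) < snd p)
           _ (h_sig_inj sinv) (v_sig_inj s));
    unfold h_sig, v_sig; simpl; try lra.
  - intros [x y] [Hx Hy]; simpl in *. assert (H := sinv_pos y Hy). split; lra.
  - intros [x y] [Hx Hy]; simpl in *. rewrite <- (s_sinv y) at 1. apply s_incr. lra.
  - intros [x y] [Hx Hy]; simpl in *. assert (H := s_pos x Hx). split; lra.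
  - intros [x y] [Hx Hy]; simpl in *. lra.
  - intros q. lra.
Qed.

End Sigma.

Theorem lemma1 (s sinv : R -> R) (hinv vinv : R * R -> R * R) :
  inc_odd_homeo s sinv ->
  (forall p, hinv (h_sig sinv p) = p) -> (forall p, h_sig sinv (hinv p) = p) ->
  (forall p, vinv (v_sig s p) = p) -> (forall p, v_sig s (vinv p) = p) ->
  free_on2 (h_sig sinv) (v_sig s) /\ free_on2 hinv vinv.
Proof.
  intros (_ & s_sinv & _ & _ & s_incr & s_odd) hK _ vK _.
  assert (Hfree := free_at_h_v s sinv s_sinv s_incr s_odd).
  split; [exact (free_at_free_on2 _ _ _ Hfree)|].
  assert (hinv_conj := left_inv_eq_right_inv _ _ _ hK (h_sig_reflect_involutive sinv)).
  assert (vinv_conj := left_inv_eq_right_inv _ _ _ vK (v_sig_reflect_involutive s s_odd)).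
  apply (free_at_free_on2 _ _ (reflect_x (1, s 1))).
  apply (free_at_ext _ _ _ _ _ (fun p => eq_sym (hinv_conj p))
           (fun p => eq_sym (vinv_conj p))).
  exact (free_at_conj reflect_x _ _ _ reflect_xK Hfree).
Qed.
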